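(* Let $\mathcal{M}$ be a II$_1$-factor with faithful normal tracial state $\tau$, $T\in\mathcal{M}$, $\nu_T$ its Brown measure, and let $\psi:[0,1]\to\overline{B_{\Vert T\Vert}}$ be Borel measurable with $\psi([0,t])$ Borel for every $t\in[0,1]$, with $Z=\{z\in\overline{B_{\Vert T\Vert}}:\psi^{-1}(z)\text{ has a minimum}\}$ Borel and $\nu_T(Z)=1$. Let $X=\{\min(\psi^{-1}(z)) : z\in Z\}\subset[0,1]$. If $b\subset[0,1]$ is Borel, then $\psi(b\cap X)$ is Borel.
   Context: $\overline{B_r}=\{z\in\mathbb{C}:|z|\le r\}$. The Brown measure $\nu_T$ is the unique Borel probability measure with $\tau(\log|T-\lambda|)=\int\log|z-\lambda|\,d\nu_T(z)$ for all $\lambda\in\mathbb{C}$. *)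

(* The complex plane C is modelled as R * R
   (with the product sigma-algebra of Borel sets = Borel sets of R^2). *)
From HB Require Import structures.
From mathcomp Require Import all_boot all_order all_algebra.
From mathcomp Require Import all_classical all_reals all_analysis.
Set Implicit Arguments. Unset Strict Implicit. Unset Printing Implicit Defensive.
Import Order.TTheory GRing.Theory Num.Theory.
Local Open Scope classical_set_scope.
Local Open Scope ring_scope.

Definition cball (R : realType) (r : R) : set (R * R) :=
  [set z | z.1 ^+ 2 + z.2 ^+ 2 <= r ^+ 2].

Definition is_min_preim (R : realType) (psi : R -> R * R) (z : R * R) (t : R) :=
  t \in `[0, 1] /\ psi t = z /\
  (forall s, s \in `[0, 1] -> psi s = z -> t <= s).

Definition Zset (R : realType) (r : R) (psi : R -> R * R) : set (R * R) :=
  [set z | cball r z /\ exists t, is_min_preim psi z t].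

Definition Xset (R : realType) (r : R) (psi : R -> R * R) : set R :=
  [set t | exists z, Zset r psi z /\ is_min_preim psi z t].

(* psi maps each point of X back to the z it is the first preimage of, so psi
   is injective on X; hence A |-> psi(A ∩ X) commutes with complements and
   countable unions, and the sets A for which psi(A ∩ X) is Borel form a
   sigma-algebra.  A point of Z has its first preimage beyond x exactly when
   psi does not hit it on [0, x], so psi(]x, +oo[ ∩ X) = Z \ psi([0, x]) is
   Borel; rays generate the Borel sets. *)
From HB Require Import structures.
From mathcomp Require Import all_boot all_order all_algebra.
From mathcomp Require Import all_classical all_reals all_analysis.
Import Order.TTheory GRing.Theory Num.Theory Num.Def.
Local Open Scope classical_set_scope.
Local Open Scope ring_scope.

Lemma image_setDI_inj {T U : Type} (f : T -> U) (X A B : set T) :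
  {in X &, injective f} ->
  f @` ((A `\` B) `&` X) = f @` (A `&` X) `\` f @` (B `&` X).
Proof.
move=> f_inj; apply/seteqP; split.
- move=> _ [t [[At nBt] Xt] <-]; split; first by exists t.
  move=> [s [Bs Xs] fs_ft]; apply: nBt.
  by rewrite -(f_inj s t) ?inE.
- move=> _ [[t [At Xt] <-] nfBt]; exists t => //.
  by split => //; split => // Bt; apply: nfBt; exists t.
Qed.

Lemma sigma_algebra_image_trace {d} {T : Type} {U : measurableType d}
    (f : T -> U) (X : set T) :
  {in X &, injective f} -> measurable (f @` X) ->
  sigma_algebra setT [set A | measurable (f @` (A `&` X))].
Proof.
move=> f_inj mfX; split => /=.
- by rewrite set0I image_set0.
- by move=> A mfA; rewrite image_setDI_inj // setTI; exact: measurableD.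
- move=> F mfF; rewrite setI_bigcupl image_bigcup.
  exact: bigcupT_measurable.
Qed.

Section first_preimages.
Variables (R : realType) (r : R) (psi : R -> R * R).
Local Notation X := (Xset r psi).
Local Notation Z := (Zset r psi).

Lemma Xset_inj : {in X &, injective psi}.
Proof.
move=> t1 t2; rewrite !inE => -[z1 [_ [t1_01 [<- t1min]]]].
move=> -[z2 [_ [t2_01 [<- t2min]]]] psi12.
apply/eqP; rewrite eq_le; apply/andP; split.
- exact: t1min t2_01 (esym psi12).
- exact: t2min t1_01 psi12.
Qed.

Lemma image_Xset : psi @` X = Z.
Proof.
apply/seteqP; split.
- by move=> _ [t [z [Zz [_ [e _]]]] <-]; rewrite e.
- move=> z Zz; have [_ [t zt]] := Zz.
  by exists t; [exists z | case: zt => _ []].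
Qed.

(* Clamping at 1 keeps the interval inside [0, 1], where psi([0, t]) is known
   to be Borel; it is harmless because X lies in [0, 1]. *)
Lemma image_Xset_gt x :
  psi @` (`]x, +oo[ `&` X) = Z `\` psi @` `[0, minr x 1].
Proof.
apply/seteqP; split.
- move=> _ [t [/= xt Xt] <-]; split; first by rewrite -image_Xset; exists t.
  case: Xt => z [_ [_ [psi_t tmin]]] [s /=].
  rewrite in_itv /= le_min => /andP[s0 /andP[sx s1]] psi_st.
  have ts : t <= s by apply: tmin; [rewrite in_itv /= s0 s1 | rewrite psi_st].
  move: xt; rewrite in_itv /= andbT => /lt_le_trans/(_ (le_trans ts sx)).
  by rewrite ltxx.
- move=> z [Zz not_hit]; have [_ [t zt]] := Zz.
  have Xt : X t by exists z.
  case: (zt) => t01 [psi_t _]; exists t => //; split => //=.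
  rewrite in_itv /= andbT ltNge; apply/negP => tx; apply: not_hit.
  exists t => //=; move: t01.
  by rewrite !in_itv /= le_min tx => /andP[-> ->].
Qed.
End first_preimages.

Theorem lemma11 (R : realType) (r : R) (hr : 0 <= r)
  (nu : probability (R * R)%type R)
  (hsupp : nu (~` cball r) = 0%E)
  (psi : R -> R * R)
  (hpsi_meas : measurable_fun (`[0, 1] : set R) psi)
  (hpsi_range : forall t, t \in `[0, 1] -> cball r (psi t))
  (hpsi_init : forall t, t \in `[0, 1] -> measurable (psi @` (`[0, t] : set R)))
  (hZ_meas : measurable (Zset r psi))
  (hZ_full : nu (Zset r psi) = 1%E) :
  forall b : set R, measurable b -> b `<=` `[0, 1] ->
    measurable (psi @` (b `&` Xset r psi)).
Proof.
move=> b mb _.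
have psi_inj := @Xset_inj R r psi.
have init_meas x : measurable (psi @` `[0, minr x 1]).
  have [x0 | x_lt0] := leP 0 x.
    by apply: hpsi_init; rewrite in_itv /= le_min x0 ler01 ge_min lexx orbT.
  by rewrite set_itv_ge ?image_set0 // bnd_simp -ltNge gt_min x_lt0.
have ray_meas x : measurable (psi @` (`]x, +oo[ `&` Xset r psi)).
  by rewrite image_Xset_gt; apply: measurableD.
have trace_sigma :
    sigma_algebra setT [set A | measurable (psi @` (A `&` Xset r psi))].
  by apply: sigma_algebra_image_trace; rewrite ?image_Xset.
apply: (smallest_sub trace_sigma _ mb) => _ [[a c] _ <-] /=.
by rewrite set_itv_splitD /= image_setDI_inj //; apply: measurableD.
Qed.
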